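(* Suppose the cost norm is $\|\cdot\|=\|\cdot\|_2$, and the Margin-without-intercept assumption and Boundedness hold. For agents $A_0,\dots,A_T\in\mathcal{A}$, let $(y_t,b_t)$ be generated by the projected strategic perceptron with $\mathbb{L}=\mathbb{R}^d\times\{0\}$ and $\gamma=1$ (so $b_t=0$ for all $t$). Then $$\sum_{t\in\mathcal{M}_T}L_{\mathrm{hinge}}\Big(\big(\tfrac{y_*}{d_*\|y_*\|_2},0\big);(s(A_t,y_t,0),1),\ell(A_t)\Big)\le0,$$ and consequently $|\mathcal{M}_T|\le\frac{(D+2/c)^2+1}{d_*^2}$.
   Context: Setting: $\mathcal{A}\subseteq\mathbb{R}^d$, labels $\ell(A)\in\{\pm1\}$; $\operatorname{sign}(0)=+1$; cost constant $c>0$; norm $\|\cdot\|_2$, $v(y)=y/\|y\|_2$ for $y\ne0$, $v(0)=0$. Predicted label $\hat\ell(x,y,b)=\operatorname{sign}(y^\top x+b-2\|y\|_2/c)$. Response: for $y\ne0$, $r(A,y,b)=A+(\tfrac2c-\tfrac{y^\top A+b}{\|y\|_2})v(y)$ if $0\le\tfrac{y^\top A+b}{\|y\|_2}<\tfrac2c$, else $A$. Proxy: for $y\ne0$, $s(A,y,b)=A-\tfrac{y^\top A+b}{\|y\|_2}v(y)$ if $0\le\tfrac{y^\top A+b}{\|y\|_2}<\tfrac2c$ and $\ell(A)=-1$; $=A+(\tfrac2c-\tfrac{y^\top A+b}{\|y\|_2})v(y)$ if the range condition holds and $\ell(A)=+1$; $=A$ otherwise; $r(A,0,b)=s(A,0,b)=A$.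 Margin-without-intercept assumption: $d_*:=\max_{y\ne0}\min_{A\in\mathcal{A}}\ell(A)\frac{y^\top A}{\|y\|_2}$ is attained at some $y_*\ne0$ and $d_*>0$. Boundedness: $D:=\sup_{A\in\mathcal{A}}\|A\|_2<\infty$. Hinge loss $L_{\mathrm{hinge}}(q;\xi,\ell)=\max\{0,1-\ell q^\top\xi\}$. Projected strategic perceptron with closed convex cone $\mathbb{L}$ and stepsize $\gamma$: $q_0=(y_0,b_0)=(0,0)$; for $t=0,\dots,T$: agent $A_t$ is shown $(y_t,b_t)$, responds $r(A_t,y_t,b_t)$, is predicted $\hat\ell(r(A_t,y_t,b_t),y_t,b_t)$; with $\xi_t=(s(A_t,y_t,b_t),1)$, $z_{t+1}=q_t+\gamma\ell(A_t)\xi_t$ on a mistake, else $z_{t+1}=q_t$; $q_{t+1}=(y_{t+1},b_{t+1})=\Pi_{\mathbb{L}}(z_{t+1})$. Mistake set $\mathcal{M}_T=\{t\in\{0,\dots,T\}:\hat\ell(r(A_t,y_t,b_t),y_t,b_t)\ne\ell(A_t)\}$. *)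

From HB Require Import structures.
From mathcomp Require Import all_boot all_order all_algebra.
From mathcomp Require Import reals.
Set Implicit Arguments. Unset Strict Implicit. Unset Printing Implicit Defensive.
Import Order.TTheory GRing.Theory Num.Theory.
Local Open Scope ring_scope.

Section StrategicPerceptron.
Variables (R : realType) (d : nat).
Notation vec := 'rV[R]_d.

Definition dotv (u v : vec) : R := \sum_(i < d) u 0 i * v 0 i.
Definition norm2 (u : vec) : R := Num.sqrt (dotv u u).

Definition vdir (y : vec) : vec := if y == 0 then 0 else (norm2 y)^-1 *: y.

Definition sgn (x : R) : R := if 0 <= x then 1 else -1.

Definition pred_label (c : R) (x y : vec) (b : R) : R :=
  sgn (dotv y x + b - 2 * norm2 y / c).

Definition resp (c : R) (A y : vec) (b : R) : vec :=
  if y == 0 then A else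
  let m := (dotv y A + b) / norm2 y in
  if (0 <= m) && (m < 2 / c) then A + (2 / c - m) *: vdir y else A.

Definition proxy (c : R) (ell : vec -> R) (A y : vec) (b : R) : vec :=
  if y == 0 then A else
  let m := (dotv y A + b) / norm2 y in
  if (0 <= m) && (m < 2 / c) then
    (if ell A == -1 then A - m *: vdir y
     else if ell A == 1 then A + (2 / c - m) *: vdir y else A)
  else A.

Definition dotq (q xi : vec * R) : R := dotv q.1 xi.1 + q.2 * xi.2.

Definition hinge (q xi : vec * R) (l : R) : R := Num.max 0 (1 - l * dotq q xi).

Definition is_mistake (c : R) (ell : vec -> R) (A : vec) (q : vec * R) : bool :=
  pred_label c (resp c A q.1 q.2) q.1 q.2 != ell A.

Fixpoint perceptron_state (c : R) (ell : vec -> R) (agents : nat -> vec)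
    (proj : vec * R -> vec * R) (gam : R) (t : nat) : vec * R :=
  match t with
  | 0%N => (0, 0)
  | t'.+1 =>
    let q := perceptron_state c ell agents proj gam t' in
    let A := agents t' in
    let xi := (proxy c ell A q.1 q.2, 1) in
    let z := if is_mistake c ell A q
             then (q.1 + (gam * ell A) *: xi.1, q.2 + gam * ell A * xi.2)
             else q in
    proj z
  end.

(* Euclidean projection onto the cone L = R^d x {0} *)
Definition proj_nointercept (z : vec * R) : vec * R := (z.1, 0).

Definition margin (ell : vec -> R) (y A : vec) : R := ell A * dotv y A / norm2 y.

(* Margin-without-intercept assumption: d_* = max_{y<>0} inf_{A in Aset} margin,
   attained at ystar <> 0, and d_* > 0. *)
Definition margin_assumption (Aset : vec -> Prop) (ell : vec -> R)
    (ystar : vec) (dstar : R) : Prop :=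
  [/\ ystar != 0,
      (forall A, Aset A -> dstar <= margin ell ystar A),
      (forall y, y != 0 -> forall e : R,
          (forall A, Aset A -> e <= margin ell y A) -> e <= dstar)
    & 0 < dstar].

Definition is_sup_norm (Aset : vec -> Prop) (D : R) : Prop :=
  (forall A, Aset A -> norm2 A <= D) /\
  (forall e : R, (forall A, Aset A -> norm2 A <= e) -> D <= e).

End StrategicPerceptron.

From HB Require Import structures.
From mathcomp Require Import all_boot all_order all_algebra.
From mathcomp Require Import reals.
From mathcomp Require Import ring lra.
Import Order.TTheory GRing.Theory Num.Theory.
Set Implicit Arguments.
Unset Strict Implicit.
Unset Printing Implicit Defensive.
Local Open Scope ring_scope.

(* Each proxy s_t differs from the agent A_t by a nonnegative multiple of
   l(A_t) v(y_t) of length at most 2/c.  While y*^T y_t >= 0 this shift cannot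
   decrease l(A_t) y*^T s_t, so the proxies keep the margin d* |y*| of the
   agents, which makes every hinge loss against y* / (d* |y*|) vanish; on a
   mistake moreover l(A_t) y_t^T s_t <= 0 and |s_t| <= D + 2/c.  Novikoff's
   perceptron argument then applies: after M mistakes y*^T y >= M d* |y*| and
   |y|^2 <= M (D + 2/c)^2, and Cauchy-Schwarz gives M <= (D + 2/c)^2 / d*^2.
   The intercept stays 0, and y*^T y_t >= 0 is carried along the induction. *)

Section EuclideanGeometry.
Variables (R : realType) (d : nat).
Implicit Types (u v w y : 'rV[R]_d) (a : R).

Lemma dotvC u v : dotv u v = dotv v u.
Proof. by apply: eq_bigr => i _; rewrite mulrC. Qed.

Lemma dotvDr u v w : dotv u (v + w) = dotv u v + dotv u w.
Proof.
by rewrite /dotv -big_split; apply: eq_bigr => i _; rewrite mxE mulrDr.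
Qed.

Lemma dotvZr u a v : dotv u (a *: v) = a * dotv u v.
Proof.
by rewrite /dotv mulr_sumr; apply: eq_bigr => i _; rewrite mxE mulrCA.
Qed.

Lemma dotvDl u v w : dotv (v + w) u = dotv v u + dotv w u.
Proof. by rewrite !(dotvC _ u) dotvDr. Qed.

Lemma dotvZl u a v : dotv (a *: v) u = a * dotv v u.
Proof. by rewrite !(dotvC _ u) dotvZr. Qed.

Lemma dotv0r u : dotv u 0 = 0.
Proof. by rewrite -(scale0r (0 : 'rV[R]_d)) dotvZr mul0r. Qed.

Lemma dotv0l u : dotv 0 u = 0.
Proof. by rewrite dotvC dotv0r. Qed.

Lemma dotvv_ge0 u : 0 <= dotv u u.
Proof. by apply: sumr_ge0 => i _; rewrite -expr2 sqr_ge0. Qed.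

Lemma dotvv_eq0 u : dotv u u = 0 -> u = 0.
Proof.
move=> uu0; apply/matrixP => i j; rewrite mxE (ord1 i).
have /(_ j isT) := psumr_eq0P (fun k _ => sqr_ge0 (u 0 k)) uu0.
by move/eqP; rewrite sqrf_eq0 => /eqP.
Qed.

(* Expand 0 <= <w u - p v, w u - p v> with w = <v, v> and p = <u, v>. *)
Lemma dotv_CauchySchwarz u v : dotv u v ^+ 2 <= dotv u u * dotv v v.
Proof.
have [/dotvv_eq0 ->|vv_neq0] := eqVneq (dotv v v) 0.
  by rewrite dotv0r dotv0l expr0n /= mulr0.
have vv_gt0 : 0 < dotv v v by rewrite lt_def vv_neq0 dotvv_ge0.
have := dotvv_ge0 (dotv v v *: u + (- dotv u v) *: v).
rewrite !(dotvDr, dotvDl, dotvZr, dotvZl) (dotvC v u) => expand_ge0.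
have : 0 <= dotv v v * (dotv u u * dotv v v - dotv u v ^+ 2) by nra.
by rewrite pmulr_rge0 // subr_ge0.
Qed.

Lemma norm2_ge0 u : 0 <= norm2 u.
Proof. exact: sqrtr_ge0. Qed.

Lemma sqr_norm2 u : norm2 u ^+ 2 = dotv u u.
Proof. by rewrite sqr_sqrtr // dotvv_ge0. Qed.

Lemma norm2_0 : norm2 (0 : 'rV[R]_d) = 0.
Proof. by rewrite /norm2 dotv0l sqrtr0. Qed.

Lemma norm2_gt0 {u} : u != 0 -> 0 < norm2 u.
Proof.
move=> u_neq0; rewrite sqrtr_gt0 lt_def dotvv_ge0 andbT.
by apply: contra u_neq0 => /eqP /dotvv_eq0 ->.
Qed.

Lemma dotv_le_norm2 u v : dotv u v <= norm2 u * norm2 v.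
Proof.
have := dotv_CauchySchwarz u v; rewrite -!sqr_norm2 -exprMn => CS.
have := mulr_ge0 (norm2_ge0 u) (norm2_ge0 v); nra.
Qed.

Lemma norm2D_le u v : norm2 (u + v) <= norm2 u + norm2 v.
Proof.
rewrite -(ler_pXn2r (_ : 0 < 2)%N) ?nnegrE ?addr_ge0 ?norm2_ge0 //.
rewrite sqr_norm2 !(dotvDr, dotvDl) -!sqr_norm2 (dotvC v u).
have := dotv_le_norm2 u v; nra.
Qed.

Lemma norm2Z a u : norm2 (a *: u) = `|a| * norm2 u.
Proof.
by rewrite /norm2 dotvZl dotvZr mulrA -expr2 sqrtrM ?sqr_ge0 // sqrtr_sqr.
Qed.

Lemma dotv_vdir u y : dotv u (vdir y) = dotv u y / norm2 y.
Proof.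
rewrite /vdir; have [->|_] := eqVneq y 0; first by rewrite dotv0r norm2_0 mul0r.
by rewrite dotvZr mulrC.
Qed.

Lemma norm2_vdir_le1 y : norm2 (vdir y) <= 1.
Proof.
rewrite /vdir; have [_|y_neq0] := eqVneq y 0; first by rewrite norm2_0.
have y_gt0 := norm2_gt0 y_neq0.
rewrite norm2Z ger0_norm ?invr_ge0 ?(ltW y_gt0) //.
by rewrite mulVf ?gt_eqF.
Qed.

Lemma sqr_norm2_update_le y s (l K : R) : l ^+ 2 = 1 -> l * dotv y s <= 0 ->
  norm2 s ^+ 2 <= K -> norm2 (y + l *: s) ^+ 2 <= norm2 y ^+ 2 + K.
Proof.
move=> l2 ys_le0 s_le; rewrite !sqr_norm2 in s_le *.
rewrite !(dotvDr, dotvDl, dotvZr, dotvZl) (dotvC s y) mulrA -expr2 l2 mul1r.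
lra.
Qed.

Lemma novikoff_bound (M delta K : R) ystar y : 0 <= M -> 0 < delta ->
  0 <= K -> ystar != 0 -> M * delta * norm2 ystar <= dotv ystar y ->
  norm2 y ^+ 2 <= M * K -> M <= K / delta ^+ 2.
Proof.
move=> M_ge0 delta_gt0 K_ge0 ystar_neq0 align y_le.
have ystar_gt0 := norm2_gt0 ystar_neq0.
have Mdelta_le : M * delta <= norm2 y.
  rewrite -(ler_pM2l ystar_gt0) mulrC; apply: le_trans align _.
  exact: dotv_le_norm2.
rewrite ler_pdivlMr ?exprn_gt0 //.
have [->|M_gt0] := eqVneq M 0; first by rewrite mul0r.
have : M * (M * delta ^+ 2) <= M * K.
  apply: le_trans y_le.
  have -> : M * (M * delta ^+ 2) = (M * delta) ^+ 2 by ring.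
  by rewrite ler_pXn2r // nnegrE ?norm2_ge0 // mulr_ge0 // ltW.
by rewrite ler_pM2l // lt_def M_gt0.
Qed.

End EuclideanGeometry.

Lemma sgn_neq1 (R : realType) (x : R) : sgn x != 1 -> x < 0.
Proof. by rewrite /sgn; case: leP => [_|//]; rewrite eqxx. Qed.

Lemma sgn_neqN1 (R : realType) (x : R) : sgn x != -1 -> 0 <= x.
Proof. by rewrite /sgn; case: leP => [//|_]; rewrite eqxx. Qed.

Section StrategicResponse.
Variables (R : realType) (d : nat) (c : R) (ell : 'rV[R]_d -> R).
Hypothesis c_gt0 : 0 < c.
Implicit Types (A y ystar : 'rV[R]_d) (b : R).

Lemma proxy_shift A y b : exists2 alpha, 0 <= alpha <= 2 / c &
  proxy c ell A y b = A + (ell A * alpha) *: vdir y.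
Proof.
have c2_ge0 : 0 <= 2 / c by rewrite divr_ge0 // ltW.
have no_shift : exists2 alpha, 0 <= alpha <= 2 / c &
    A = A + (ell A * alpha) *: vdir y.
  by exists 0; rewrite ?lexx ?c2_ge0 // mulr0 scale0r addr0.
rewrite /proxy; case: eqP => [_|_]; first exact: no_shift.
set m := (dotv y A + b) / norm2 y.
case: ifP => [/andP [m_ge0 m_lt] | _]; last exact: no_shift.
have [ell_m1|_] := eqVneq (ell A) (-1).
  by exists m; [rewrite m_ge0 ltW | rewrite ell_m1 mulN1r scaleNr].
have [ell_1|_] := eqVneq (ell A) 1; last exact: no_shift.
by exists (2 / c - m); [rewrite subr_ge0 ltW //= gerBl | rewrite ell_1 mul1r].
Qed.

Lemma proxy_alignment_ge A y ystar b : 0 <= dotv ystar y ->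
  ell A * dotv ystar A <= ell A * dotv ystar (proxy c ell A y b).
Proof.
move=> align_ge0; have [alpha /andP [alpha_ge0 _] ->] := proxy_shift A y b.
rewrite dotvDr dotvZr dotv_vdir.
have : 0 <= dotv ystar y / norm2 y by rewrite divr_ge0 ?norm2_ge0.
move/(mulr_ge0 (mulr_ge0 (sqr_ge0 (ell A)) alpha_ge0)); nra.
Qed.

Lemma norm2_proxy_le A y b : ell A = 1 \/ ell A = -1 ->
  norm2 (proxy c ell A y b) <= norm2 A + 2 / c.
Proof.
move=> ell_sign.
have [alpha /andP [alpha_ge0 alpha_le] ->] := proxy_shift A y b.
apply: le_trans (norm2D_le _ _) _; rewrite lerD2l norm2Z.
have ell_alpha : `|ell A * alpha| = alpha.
  rewrite normrM (ger0_norm alpha_ge0).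
  by case: ell_sign => ->; rewrite ?normrN normr1 mul1r.
rewrite ell_alpha; apply: le_trans alpha_le.
by rewrite ler_piMr ?norm2_vdir_le1.
Qed.

Lemma mistake_proxy_le0 A q : ell A = 1 \/ ell A = -1 -> is_mistake c ell A q ->
  ell A * dotq q (proxy c ell A q.1 q.2, 1) <= 0.
Proof.
case: q => y b ell_sign.
rewrite /is_mistake /pred_label /resp /proxy /dotq /= mulr1.
have [->|y_neq0] := eqVneq y 0.
  rewrite !dotv0l norm2_0 mulr0 mul0r add0r subr0.
  by case: ell_sign => ->; [move/sgn_neq1 | move/sgn_neqN1]; lra.
have y_gt0 := norm2_gt0 y_neq0.
set m := (dotv y A + b) / norm2 y.
have mE : dotv y A + b = m * norm2 y by rewrite mulfVK ?gt_eqF.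
have c2y_ge0 : 0 <= 2 * norm2 y / c by rewrite !mulr_ge0 ?invr_ge0 ?ltW.
case: ifP => [/andP [m_ge0 m_lt] | m_out]; last first.
  rewrite mE; case: ell_sign => ->; last by move/sgn_neqN1; lra.
  move/sgn_neq1; case: (leP 0 m) m_out => [m_ge0 /= /negbT|]; last by nra.
  by rewrite -leNgt; nra.
have yy : dotv y y / norm2 y = norm2 y.
  by rewrite -sqr_norm2 expr2 mulfK ?gt_eqF.
rewrite dotvDr dotvZr dotv_vdir yy.
have -> : dotv y A + (2 / c - m) * norm2 y + b - 2 * norm2 y / c = 0 by lra.
rewrite /sgn lexx; case: ell_sign => ->; rewrite eqxx //= => _.
by rewrite dotvDr -scaleNr dotvZr dotv_vdir yy; lra.
Qed.

End StrategicResponse.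

Lemma hinge_margin_eq0 (R : realType) (d : nat)
    (ystar s : 'rV[R]_d) (l dstar : R) :
  0 < dstar -> ystar != 0 -> dstar * norm2 ystar <= l * dotv ystar s ->
  hinge ((norm2 ystar * dstar)^-1 *: ystar, 0) (s, 1) l = 0.
Proof.
move=> dstar_gt0 ystar_neq0 margin; have ystar_gt0 := norm2_gt0 ystar_neq0.
apply/max_idPl; rewrite /dotq /= mul0r addr0 dotvZl mulrCA subr_le0.
by rewrite ler_pdivlMl ?mulr_gt0 // mulr1 mulrC.
Qed.

Section NoInterceptPerceptron.
Variables (R : realType) (d : nat) (c : R) (ell : 'rV[R]_d -> R).
Variable agents : nat -> 'rV[R]_d.
Hypothesis c_gt0 : 0 < c.

Local Notation q := (perceptron_state c ell agents (@proj_nointercept R d) 1).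
Local Notation mistake t := (is_mistake c ell (agents t) (q t)).

Definition mistake_count n : nat := \sum_(t < n) mistake t.

Lemma card_mistakes n : #|[set t : 'I_n | mistake t]| = mistake_count n.
Proof.
rewrite -sum1_card big_mkcond; apply: eq_bigr => t _.
by rewrite inE; case: (mistake t).
Qed.

Lemma mistake_countS n : mistake_count n.+1 = (mistake_count n + mistake n)%N.
Proof. by rewrite /mistake_count big_ord_recr. Qed.

Lemma perceptron_intercept0 t : (q t).2 = 0.
Proof. by case: t. Qed.

Lemma perceptron_stateS t : (q t.+1).1 =
  if mistake t then (q t).1 + ell (agents t) *: proxy c ell (agents t) (q t).1 0
  else (q t).1.
Proof. by rewrite /= perceptron_intercept0 mul1r; case: ifP. Qed.

Variables (Aset : 'rV[R]_d -> Prop) (ystar : 'rV[R]_d) (dstar D : R).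
Hypothesis ell_sign : forall A, Aset A -> ell A = 1 \/ ell A = -1.
Hypothesis margin_ge : forall A, Aset A -> dstar <= margin ell ystar A.
Hypothesis norm_le : forall A, Aset A -> norm2 A <= D.
Hypothesis ystar_neq0 : ystar != 0.
Hypothesis dstar_gt0 : 0 < dstar.

Lemma proxy_margin_ge A y : Aset A -> 0 <= dotv ystar y ->
  dstar * norm2 ystar <= ell A * dotv ystar (proxy c ell A y 0).
Proof.
move=> AsetA align_ge0.
apply: le_trans (proxy_alignment_ge ell c_gt0 A 0 align_ge0).
by rewrite -ler_pdivlMr ?norm2_gt0 //; exact: margin_ge.
Qed.

Lemma sqr_norm2_proxy_le A y : Aset A ->
  norm2 (proxy c ell A y 0) ^+ 2 <= (D + 2 / c) ^+ 2.
Proof.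
move=> AsetA; have := norm2_proxy_le c_gt0 y 0 (ell_sign AsetA).
have := norm_le AsetA; have := norm2_ge0 (proxy c ell A y 0); nra.
Qed.

Lemma perceptron_invariant n : (forall t, (t < n)%N -> Aset (agents t)) ->
  (mistake_count n)%:R * dstar * norm2 ystar <= dotv ystar (q n).1 /\
  norm2 (q n).1 ^+ 2 <= (mistake_count n)%:R * (D + 2 / c) ^+ 2.
Proof.
elim: n => [_|n IH agents_in].
  by rewrite /= /mistake_count big_ord0 dotv0r norm2_0 expr0n /= !mul0r.
have [align norm_sq] := IH (fun t lt_tn => agents_in t (ltnW lt_tn)).
have AsetA := agents_in n (ltnSn n).
rewrite perceptron_stateS mistake_countS natrD.
case: ifP => is_mist; last by rewrite !addr0.
have align_ge0 : 0 <= dotv ystar (q n).1.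
  by apply: le_trans align; rewrite !mulr_ge0 ?norm2_ge0 // ltW.
split.
- rewrite dotvDr dotvZr mulrDl mulrDl mul1r.
  by apply: lerD align _; exact: proxy_margin_ge.
- rewrite mulrDl mul1r.
  apply: le_trans (sqr_norm2_update_le _ _ (sqr_norm2_proxy_le _ AsetA)) _.
  + by case: (ell_sign AsetA) => ->; rewrite ?sqrrN expr1n.
  + have := mistake_proxy_le0 c_gt0 (ell_sign AsetA) is_mist.
    by rewrite /dotq perceptron_intercept0 mul0r addr0.
  + by rewrite lerD2r.
Qed.

Lemma perceptron_alignment_ge0 n : (forall t, (t < n)%N -> Aset (agents t)) ->
  0 <= dotv ystar (q n).1.
Proof.
move/perceptron_invariant => [align _]; apply: le_trans align.
by rewrite !mulr_ge0 ?norm2_ge0 // ltW.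
Qed.

End NoInterceptPerceptron.

Theorem mainTheorem17 (R : realType) (d : nat) (Aset : 'rV[R]_d -> Prop)
    (ell : 'rV[R]_d -> R) (c : R) (ystar : 'rV[R]_d) (dstar D : R)
    (agents : nat -> 'rV[R]_d) (T : nat) :
  (forall A, Aset A -> ell A = 1 \/ ell A = -1) ->
  0 < c ->
  margin_assumption Aset ell ystar dstar ->
  is_sup_norm Aset D ->
  (forall t, (t <= T)%N -> Aset (agents t)) ->
  let q := perceptron_state c ell agents (@proj_nointercept R d) 1 in
  let mistake t := is_mistake c ell (agents t) (q t) in
  (\sum_(t < T.+1 | mistake t)
      hinge ((norm2 ystar * dstar)^-1 *: ystar, 0)
            (proxy c ell (agents t) (q t).1 0, 1) (ell (agents t)) <= 0)
  /\ (#|[set t : 'I_T.+1 | mistake t]|%:R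
        <= ((D + 2 / c) ^+ 2 + 1) / dstar ^+ 2).
Proof.
move=> ell_sign c_gt0 [ystar_neq0 margin_ge _ dstar_gt0] [norm_le _] agents_in.
move=> q mistake.
have agents_before n : (n <= T.+1)%N -> forall t, (t < n)%N -> Aset (agents t).
  by move=> le_nT t lt_tn; apply: agents_in; rewrite -ltnS (leq_trans lt_tn).
split.
  apply: sumr_le0 => t _; rewrite hinge_margin_eq0 //.
  apply: (proxy_margin_ge c_gt0 margin_ge ystar_neq0).
    exact: agents_in _ (ltn_ord t).
  exact: (perceptron_alignment_ge0 c_gt0 ell_sign margin_ge norm_le ystar_neq0
    dstar_gt0 (agents_before t (ltnW (ltn_ord t)))).
have [align norm_sq] := perceptron_invariant c_gt0 ell_sign margin_ge norm_le
  ystar_neq0 dstar_gt0 (agents_before T.+1 (leqnn _)).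
rewrite card_mistakes; apply: le_trans
  (novikoff_bound (ler0n _ _) dstar_gt0 (sqr_ge0 _) ystar_neq0 align norm_sq) _.
(* The [+ 1] is the intercept coordinate of the general bound; here b_t = 0. *)
by rewrite ler_pM2r ?invr_gt0 ?exprn_gt0 // lerDl.
Qed.
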